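(* Let $n \geq 2$, let $k \geq 2$ be an integer and let $(M_1, \dots, M_k) \in \mathrm{GL}_n(\mathbb{R})^k$. The following are equivalent. \begin{enumerate} \item There do not exist nonzero vectors $\mathbf v_1, \dots, \mathbf v_k \in \mathbb{R}^n \setminus\{\mathbf 0\}$, each with rationally dependent components, such that $M_1 \mathbf v_1 = M_2 \mathbf v_2 = \dots = M_k \mathbf v_k$. \item For all $\mathbf g_1, \dots, \mathbf g_k \in \mathbb{R}^n$ and all $(M_1', \dots, M_k') \in \mathrm{GL}_n(\mathbb{R})^k$ such that $\pi_k(M_1', \dots, M_k') = \pi_k(M_1, \dots, M_k)$, the set \[ \bigcup_{i=1}^k \left(M_i' \cdot \mathbb{Z}^n + \mathbf g_i\right) \] is a dense forest. \end{enumerate}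
   Context: A vector $\mathbf v \in \mathbb{R}^n$ has rationally dependent components if there is $\mathbf q \in \mathbb{Z}^n \setminus \{\mathbf 0\}$ with $\mathbf q \cdot \mathbf v = 0$; otherwise it has rationally independent components. A set $F \subset \mathbb{R}^n$ is a dense forest if for every $\varepsilon > 0$ there exists $V(\varepsilon) > 0$ such that every line segment in $\mathbb{R}^n$ of length $V(\varepsilon)$ intersects $\bigcup_{\mathbf f \in F} B_2(\mathbf f, \varepsilon)$, where $B_2(\mathbf f, \varepsilon)$ is the open Euclidean ball of radius $\varepsilon$ centred at $\mathbf f$. Let $\mathcal{S}_n^k := \left(\mathbb{R}^* \backslash \mathrm{GL}_n(\mathbb{R}) / \mathrm{GL}_n(\mathbb{Q})\right)^k$, where $\mathbb{R}^*$ (nonzero reals) acts by left multiplication as homothetic matrices and $\mathrm{GL}_n(\mathbb{Q})$ acts by right multiplication, and let $\pi_k : \mathrm{GL}_n(\mathbb{R})^k \to \mathcal{S}_n^k$ be the canonical projection. Thus $\pi_k(M_1', \dots, M_k') = \pi_k(M_1, \dots, M_k)$ iff for each $i$ there are $c_i \in \mathbb{R}^*$ and $Q_i \in \mathrm{GL}_n(\mathbb{Q})$ with $M_i' = c_i M_i Q_i$. *)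

From HB Require Import structures.
From mathcomp Require Import all_boot all_order all_algebra.
From mathcomp Require Import reals.
Set Implicit Arguments. Unset Strict Implicit. Unset Printing Implicit Defensive.
Import Order.TTheory GRing.Theory Num.Theory.
Local Open Scope ring_scope.

Definition norm2 {R : realType} {n : nat} (v : 'cV[R]_n) : R :=
  Num.sqrt (\sum_(i < n) v i 0 ^+ 2).

Definition rat_dependent {R : realType} {n : nat} (v : 'cV[R]_n) : Prop :=
  exists q : 'cV[int]_n, q != 0 /\ \sum_(i < n) (q i 0)%:~R * v i 0 = 0.

Definition dense_forest {R : realType} {n : nat} (F : 'cV[R]_n -> Prop) : Prop :=
  forall eps : R, 0 < eps -> exists V : R, 0 < V /\
    forall a b : 'cV[R]_n, norm2 (b - a) = V ->
      exists t : R, 0 <= t <= 1 /\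
        exists f, F f /\ norm2 (a + t *: (b - a) - f) < eps.

Definition shifted_lattice {R : realType} {n : nat} (M : 'M[R]_n) (g : 'cV[R]_n)
  : 'cV[R]_n -> Prop :=
  fun x => exists z : 'cV[int]_n, x = M *m map_mx (fun m : int => m%:~R) z + g.

(* pi_k(M') = pi_k(M) in (R^* \ GL_n(R) / GL_n(Q))^k *)
Definition same_class {R : realType} {n k : nat} (M M' : 'I_k -> 'M[R]_n) : Prop :=
  forall i : 'I_k, exists c : R, c != 0 /\
    exists Q : 'M[rat]_n, Q \in unitmx /\
      M' i = c *: (M i *m map_mx (fun q : rat => ratr q) Q).

From HB Require Import structures.
From mathcomp Require Import all_boot all_order all_algebra.
From mathcomp Require Import reals boolp classical_sets topology normedtype.
From mathcomp Require Import ring lra.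
Import Order.TTheory GRing.Theory Num.Theory.
Import numFieldTopology.Exports numFieldNormedType.Exports.
Set Implicit Arguments. Unset Strict Implicit. Unset Printing Implicit Defensive.
Local Open Scope ring_scope.

(* Rational dependence of M_i^-1 w is invariant under M_i |-> c M_i Q with Q rational,
   so (1) says that for every direction w <> 0 some M'_i^-1 w has rationally independent
   components.  By Kronecker's theorem the set {t M'_i^-1 w + z | t real, z in Z^n} is then
   dense, with |t| bounded uniformly in the point to be approximated; hence every long
   segment with direction close to w passes near M'_i Z^n + g_i, and compactness of the
   sphere of directions makes the length uniform.  Kronecker's theorem follows from: a
   subgroup G of R^n that is not dense admits a nonzero a with a.G in Z, proved by
   induction on the dimension, projecting G along a short or a near-shortest element.
   Conversely, if M_i v_i = w with q_i.v_i = 0 for integral q_i <> 0, the shifts g_i can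
   be chosen so that x |-> q_i.M_i^-1 x maps M_i Z^n + g_i into 1/2 + Z while vanishing on
   the line R w, which then stays away from the union of the shifted lattices. *)

Lemma exists_nz_entry (V : zmodType) n (x : 'cV[V]_n) : x != 0 -> exists j, x j 0 != 0.
Proof.
move=> x0; apply/existsP; apply: contraNT x0 => /existsPn x0.
by apply/eqP/matrixP => i j; rewrite (ord1 j) mxE; apply/eqP/negPn.
Qed.

(* On matrices and vectors, [`|_|] is the max norm of matrix_normedtype. *)
Section MatrixNorm.
Variable R : realType.

Lemma ler_mx_norm_entry m n (A : 'M[R]_(m, n)) i j : `|A i j| <= `|A|.
Proof.
rewrite [leRHS]/Num.norm /= mx_normrE.
exact: (le_bigmax _ (fun ij : 'I_m * 'I_n => `|A ij.1 ij.2|) (i, j)).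
Qed.

Lemma mx_norm_le m n (A : 'M[R]_(m, n)) c :
  0 <= c -> (forall i j, `|A i j| <= c) -> `|A| <= c.
Proof.
move=> c0 hA; rewrite [leLHS]/Num.norm /= mx_normrE.
by apply: bigmax_le => // -[i j] _; exact: hA.
Qed.

Lemma mx_normT m n (A : 'M[R]_(m, n)) : `|A^T| = `|A|.
Proof.
apply/le_anti/andP; split; apply: mx_norm_le => // i j.
  by rewrite mxE; exact: ler_mx_norm_entry.
by have := ler_mx_norm_entry A^T j i; rewrite mxE.
Qed.

Lemma mx_norm_delta m n (i : 'I_m) (j : 'I_n) : `|delta_mx i j : 'M[R]_(m, n)| = 1.
Proof.
apply/le_anti/andP; split.
  by apply: mx_norm_le => // a b; rewrite mxE; case: (_ && _); rewrite ?normr1 ?normr0.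
by have := ler_mx_norm_entry (delta_mx i j : 'M[R]_(m, n)) i j; rewrite mxE !eqxx normr1.
Qed.

Lemma ler_mx_norm_mul m n p (A : 'M[R]_(m, n)) (B : 'M[R]_(n, p)) :
  `|A *m B| <= n%:R * (`|A| * `|B|).
Proof.
apply: mx_norm_le => [|i j]; first by rewrite !mulr_ge0.
rewrite mxE; apply: le_trans (ler_norm_sum _ _ _) _.
rewrite mulr_natl -[n in _ *+ n]card_ord -sumr_const.
apply: ler_sum => k _; rewrite normrM.
by apply: ler_pM; rewrite ?normr_ge0 ?ler_mx_norm_entry.
Qed.

Lemma norm2_ge_mx_norm n (x : 'cV[R]_n) : `|x| <= norm2 x.
Proof.
apply: mx_norm_le => [|i j]; first exact: sqrtr_ge0.
rewrite (ord1 j) -sqrtr_sqr; apply: ler_wsqrtr.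
by rewrite (bigD1 i) //= lerDl; apply: sumr_ge0 => l _; exact: sqr_ge0.
Qed.

Lemma norm2_le_mx_norm n (x : 'cV[R]_n) : norm2 x <= n%:R * `|x|.
Proof.
rewrite -[leRHS]ger0_norm ?mulr_ge0 // -sqrtr_sqr; apply: ler_wsqrtr.
apply: le_trans (_ : \sum_(i < n) `|x| ^+ 2 <= _).
  apply: ler_sum => i _; rewrite -real_normK ?num_real //.
  by rewrite lerXn2r ?nnegrE ?ler_mx_norm_entry.
rewrite sumr_const card_ord -[`|x| ^+ 2 *+ n]mulr_natr exprMn mulrC.
apply: ler_wpM2r; first exact: sqr_ge0.
rewrite -natrX ler_nat; case: n x => // n _.
by rewrite expnS expn1 leq_pmulr.
Qed.

Lemma norm2Z n (c : R) (x : 'cV[R]_n) : norm2 (c *: x) = `|c| * norm2 x.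
Proof.
rewrite /norm2 -sqrtr_sqr -sqrtrM ?sqr_ge0 // mulr_sumr.
by congr Num.sqrt; apply: eq_bigr => i _; rewrite mxE exprMn.
Qed.

End MatrixNorm.

Section Vdot.
Variables (R : realType) (n : nat).
Implicit Types (a x y : 'cV[R]_n).

Definition vdot a x : R := \sum_i a i 0 * x i 0.

Definition int_vec (z : 'cV[int]_n) : 'cV[R]_n := map_mx (fun m : int => m%:~R) z.

Lemma vdotC a x : vdot a x = vdot x a.
Proof. by apply: eq_bigr => i _; rewrite mulrC. Qed.

Lemma vdotDr a x y : vdot a (x + y) = vdot a x + vdot a y.
Proof. by rewrite /vdot -big_split; apply: eq_bigr => i _; rewrite mxE mulrDr. Qed.

Lemma vdotZr a (c : R) x : vdot a (c *: x) = c * vdot a x.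
Proof. by rewrite /vdot mulr_sumr; apply: eq_bigr => i _; rewrite mxE mulrCA. Qed.

Lemma vdot0r a : vdot a 0 = 0.
Proof. by rewrite /vdot big1 // => i _; rewrite mxE mulr0. Qed.

Lemma vdotBr a x y : vdot a (x - y) = vdot a x - vdot a y.
Proof. by rewrite -scaleN1r vdotDr vdotZr mulN1r. Qed.

Lemma vdotZl a (c : R) x : vdot (c *: x) a = c * vdot x a.
Proof. by rewrite ![vdot _ a]vdotC vdotZr. Qed.

Lemma vdotBl a x y : vdot (x - y) a = vdot x a - vdot y a.
Proof. by rewrite ![vdot _ a]vdotC vdotBr. Qed.

Lemma vdot_delta a (j : 'I_n) : vdot (delta_mx j 0) a = a j 0.
Proof.
rewrite /vdot (bigD1 j) //= big1 ?addr0 => [|i /negPf nij]; rewrite mxE.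
  by rewrite !eqxx mul1r.
by rewrite nij mul0r.
Qed.

Lemma ler_vdot a x : `|vdot a x| <= n%:R * (`|a| * `|x|).
Proof.
rewrite /vdot; apply: le_trans (ler_norm_sum _ _ _) _.
rewrite mulr_natl -[n in _ *+ n]card_ord -sumr_const.
apply: ler_sum => i _; rewrite normrM.
by apply: ler_pM; rewrite ?normr_ge0 ?ler_mx_norm_entry.
Qed.

Lemma vdot_mulmxr a (B : 'M[R]_n) x : vdot a (B *m x) = vdot (B^T *m a) x.
Proof.
have vdotE y z : vdot y z = (y^T *m z) 0 0.
  by rewrite mxE; apply: eq_bigr => i _; rewrite mxE.
by rewrite !vdotE mulmxA trmx_mul trmxK.
Qed.

Lemma rat_dependentE x :
  rat_dependent x <-> exists q : 'cV[int]_n, q != 0 /\ vdot (int_vec q) x = 0.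
Proof.
have E q : vdot (int_vec q) x = \sum_i (q i 0)%:~R * x i 0.
  by apply: eq_bigr => i _; rewrite mxE.
by split=> -[q [q0 hq]]; exists q; rewrite ?E // -E.
Qed.

Lemma int_vecB (z1 z2 : 'cV[int]_n) : int_vec (z1 - z2) = int_vec z1 - int_vec z2.
Proof. by apply/matrixP => i j; rewrite !mxE intrB. Qed.

Lemma int_vecD (z1 z2 : 'cV[int]_n) : int_vec (z1 + z2) = int_vec z1 + int_vec z2.
Proof. by apply/matrixP => i j; rewrite !mxE intrD. Qed.

Lemma int_vec0 : int_vec 0 = 0.
Proof. by apply/matrixP => i j; rewrite !mxE. Qed.

Lemma int_vec_delta (l : 'I_n) : int_vec (delta_mx l 0) = delta_mx l 0.
Proof. by apply/matrixP => i j; rewrite !mxE; case: (_ && _). Qed.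

Lemma vdot_int_vec (q z : 'cV[int]_n) : vdot (int_vec q) (int_vec z) \is a Num.int.
Proof.
rewrite /vdot; apply: rpred_sum => i _; rewrite !mxE -intrM; exact: intr_int.
Qed.

End Vdot.
Arguments int_vec {R n}.

Section Rounding.
Variable R : realType.

Lemma exists_round (c : R) : exists m : int, `|c - m%:~R| <= 2^-1.
Proof.
exists (Num.floor (c + 2^-1)).
have /andP [h1 h2] := floor_itv (c + 2^-1).
by move: h1 h2; rewrite intrD ler_norml; set F := (Num.floor _)%:~R => h1 h2; lra.
Qed.

Lemma ler_half_dist_int (x : R) : x \is a Num.int -> 2^-1 <= `|2^-1 - x|.
Proof.
move=> /intrP [m ->]; have [m_le0 | m_gt0] := lerP m 0.
  have : (m%:~R : R) <= 0%:~R by rewrite ler_int.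
  by move=> h; rewrite ger0_norm; lra.
have : (1%:~R : R) <= m%:~R by rewrite ler_int.
by move=> h; rewrite ler0_norm; lra.
Qed.

Lemma half_not_int : (2^-1 : R) \isn't a Num.int.
Proof.
apply/negP => /ler_half_dist_int; rewrite subrr normr0 invr_le0; lra.
Qed.

End Rounding.

Section SubgroupDual.
Variables (R : realType) (n : nat).
Implicit Types (x y u a : 'cV[R]_n) (S : {set 'I_n}) (G : set 'cV[R]_n).

Definition additive_subgroup G := G 0 /\ forall x y, G x -> G y -> G (x - y).

Definition supported S x := forall i, i \notin S -> x i 0 = 0.

Definition nondense_in S G :=
  exists2 y, supported S y & exists2 d, 0 < d & forall g, G g -> d <= `|y - g|.

Definition nonzero_dual S G a :=
  (exists2 l, l \in S & a l 0 != 0) /\ forall g, G g -> vdot a g \is a Num.int.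

Lemma subgroupN G x : additive_subgroup G -> G x -> G (- x).
Proof. by move=> [G0 GB] Gx; rewrite -sub0r; apply: GB. Qed.

Lemma subgroupD G x y : additive_subgroup G -> G x -> G y -> G (x + y).
Proof. by move=> sG Gx Gy; rewrite -[y]opprK; apply: sG.2 => //; exact: subgroupN. Qed.

Lemma subgroupMz G x (m : int) : additive_subgroup G -> G x -> G (m%:~R *: x).
Proof.
move=> sG Gx; have Gnat (k : nat) : G (k%:R *: x).
  elim: k => [|k IH]; first by rewrite scale0r; exact: sG.1.
  by rewrite -natr1 scalerDl scale1r; exact: subgroupD.
case: m => k; first exact: Gnat.
by rewrite NegzE intrN scaleNr; apply: subgroupN => //; exact: Gnat.
Qed.

Lemma supported_setT x : supported [set: 'I_n] x.
Proof. by move=> i; rewrite inE. Qed.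

Lemma supported_empty S x : (forall i, i \notin S) -> supported S x -> x = 0.
Proof. by move=> S0 sx; apply/matrixP => i j; rewrite (ord1 j) mxE sx. Qed.

Lemma supported_nz_entry S x j : supported S x -> x j 0 != 0 -> j \in S.
Proof. by move=> sx; apply: contraR => jS; rewrite sx. Qed.

Definition proj_along u j x := x - (x j 0 / u j 0) *: u.

Lemma proj_alongB u j x y :
  proj_along u j (x - y) = proj_along u j x - proj_along u j y.
Proof.
by apply/matrixP => a b; rewrite !mxE; ring.
Qed.

Lemma proj_alongMz u j (m : int) : u j 0 != 0 -> proj_along u j (m%:~R *: u) = 0.
Proof. by move=> uj; rewrite /proj_along mxE -mulrA divff // mulr1 subrr. Qed.

Lemma supported_proj_along S u j x : u j 0 != 0 ->
  supported S u -> supported S x -> supported (S :\ j) (proj_along u j x).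
Proof.
move=> uj su sx i; rewrite in_setD1 negb_and negbK => /orP [/eqP -> | iS].
  by rewrite !mxE divfK // subrr.
by rewrite !mxE (su i iS) (sx i iS) mulr0 subrr.
Qed.

Lemma vdot_proj_along a u j x :
  vdot a (proj_along u j x) = vdot (a - (vdot a u / u j 0) *: delta_mx j 0) x.
Proof. by rewrite vdotBr vdotZr vdotBl vdotZl vdot_delta; congr (_ - _); ring. Qed.

Lemma round_along u j x : u j 0 != 0 -> exists m : int,
  `|x - m%:~R *: u| <= `|proj_along u j x| + `|u| / 2.
Proof.
move=> uj; have [m hm] := exists_round (x j 0 / u j 0); exists m.
have -> : x - m%:~R *: u = proj_along u j x + (x j 0 / u j 0 - m%:~R) *: u.
  by rewrite /proj_along scalerBl addrA subrK.
apply: le_trans (ler_normD _ _) _; rewrite lerD2l normrZ mulrC.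
by rewrite ler_wpM2l.
Qed.

Definition proj_image u j G : set 'cV[R]_n := (proj_along u j @` G)%classic.

Lemma subgroup_proj_image G u j :
  additive_subgroup G -> additive_subgroup (proj_image u j G).
Proof.
move=> sG; split; first by exists 0; [exact: sG.1 | rewrite /proj_along mxE mul0r scale0r subr0].
move=> _ _ [x Gx <-] [y Gy <-]; exists (x - y); first exact: sG.2.
exact: proj_alongB.
Qed.

Lemma nonzero_dual_lift S G u j a : j \in S ->
  nonzero_dual (S :\ j) (proj_image u j G) a ->
  nonzero_dual S G (a - (vdot a u / u j 0) *: delta_mx j 0).
Proof.
move=> jS [[l]]; rewrite in_setD1 => /andP [lj lS] al ha; split.
  by exists l => //; rewrite !mxE (negPf lj) mulr0 subr0.
by move=> g Gg; rewrite -vdot_proj_along; apply: ha; exists g.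
Qed.

Lemma nondense_proj_image S G u j y d : additive_subgroup G -> G u ->
  u j 0 != 0 -> supported S u -> supported S y -> `|u| < 2 * d ->
  (forall g, G g -> d <= `|y - g|) -> nondense_in (S :\ j) (proj_image u j G).
Proof.
move=> sG Gu uj su sy ud yd.
exists (proj_along u j y); first exact: supported_proj_along.
exists (d - `|u| / 2) => [|_ [g Gg <-]]; first lra.
have [m hm] := round_along (y - g) uj.
have := yd (g + m%:~R *: u) (subgroupD sG Gg (subgroupMz m sG Gu)).
by rewrite opprD addrA -proj_alongB; lra.
Qed.

Lemma nondense_of_discrete S G l r : l \in S -> 0 < r ->
  (forall g, G g -> g != 0 -> r <= `|g|) -> nondense_in S G.
Proof.
move=> lS r0 Gr; exists ((r / 2) *: delta_mx l 0).
  by move=> i iS; rewrite !mxE; case: eqP iS => [-> /negP //|_ _]; rewrite andFb mulr0.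
have ny : `|(r / 2) *: delta_mx l 0 : 'cV[R]_n| = r / 2.
  by rewrite normrZ mx_norm_delta mulr1 ger0_norm //; lra.
exists (r / 4) => [|g Gg]; first lra.
have [-> | g0] := eqVneq g 0; first by rewrite subr0 ny; lra.
have := Gr g Gg g0; have := ler_normD (g - (r / 2) *: delta_mx l 0) ((r / 2) *: delta_mx l 0).
by rewrite subrK ny distrC; lra.
Qed.

Lemma exists_near_shortest G d : (exists2 g, G g & g != 0) -> 0 < d ->
  (forall g, G g -> g != 0 -> d <= `|g|) ->
  exists s, (forall g, G g -> g != 0 -> s <= `|g|) /\
    exists u, [/\ G u, u != 0 & `|u| < 2 * s].
Proof.
move=> [g0 Gg0 g00] d0 Gd.
pose E := [set `|g| | g in [set g | G g /\ g != 0]]%classic.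
have hE : has_inf E.
  by split; [exists `|g0|, g0 | exists d => _ [g [Gg gn0] <-]; exact: Gd].
have s_ge_d : d <= inf E by apply: lb_le_inf => [|_ [g [Gg gn0] <-]]; [case: hE | exact: Gd].
exists (inf E); split => [g Gg gn0|]; first by apply: (ge_inf (proj2 hE)); exists g.
have [_ [u [Gu u0] <-] hu] := inf_adherent (lt_le_trans d0 s_ge_d) hE.
by exists u; split => //; lra.
Qed.

Section NearShortest.
Variables (G : set 'cV[R]_n) (u : 'cV[R]_n) (j : 'I_n) (s : R).
Hypotheses (sG : additive_subgroup G) (Gu : G u) (uj : u j 0 != 0)
  (Gs : forall g, G g -> g != 0 -> s <= `|g|).

Lemma discrete_proj_image p : proj_image u j G p -> p != 0 -> s - `|u| / 2 <= `|p|.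
Proof.
move=> [h Gh <-] p0; have [m hm] := round_along h uj.
have Ghm : G (h - m%:~R *: u) by apply: sG.2 => //; exact: subgroupMz.
have [hm0 | hm0] := eqVneq (h - m%:~R *: u) 0.
  by move: p0; rewrite -[h](subrK (m%:~R *: u)) hm0 add0r proj_alongMz ?eqxx.
by have := Gs Ghm hm0; lra.
Qed.

Lemma proj_along_eq0_int h : `|u| < 2 * s -> G h -> proj_along u j h = 0 ->
  h j 0 / u j 0 \is a Num.int.
Proof.
move=> us Gh ph; have [m] := round_along h uj; rewrite ph normr0 add0r => hm.
have Ghm : G (h - m%:~R *: u) by apply: sG.2 => //; exact: subgroupMz.
have [hm0 | hm0] := eqVneq (h - m%:~R *: u) 0; last by have := Gs Ghm hm0; lra.
by rewrite -[h](subrK (m%:~R *: u)) hm0 add0r mxE mulfK // intr_int.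
Qed.

End NearShortest.

Lemma nonzero_dual_of_nondense S G : additive_subgroup G ->
  (forall g, G g -> supported S g) -> nondense_in S G -> exists a, nonzero_dual S G a.
Proof.
move Hm : #|S| => m; elim: m S G Hm => [|m IH] S G cardS sG GS [y Sy [d d0 yd]].
  have S0 i : i \notin S by rewrite (card0_eq cardS).
  by have := yd 0 sG.1; rewrite (supported_empty S0 Sy) subrr normr0 leNgt d0.
have reduce u j : G u -> u j 0 != 0 -> nondense_in (S :\ j) (proj_image u j G) ->
    exists a, nonzero_dual S G a.
  move=> Gu uj ndS; have jS := supported_nz_entry (GS u Gu) uj.
  have cardSj : #|S :\ j| = m by move: (cardsD1 j S); rewrite jS cardS add1n => -[].
  have GSj p : proj_image u j G p -> supported (S :\ j) p.
    by case=> g Gg <-; exact: supported_proj_along uj (GS u Gu) (GS g Gg).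
  have [a ha] := IH _ _ cardSj (subgroup_proj_image u j sG) GSj ndS.
  by exists (a - (vdot a u / u j 0) *: delta_mx j 0); exact: nonzero_dual_lift.
(* Either G has a nonzero element shorter than d, and projecting along it keeps the
   image nondense, or G is discrete and so is its image modulo a near-shortest element. *)
have [[u [Gu u0 ud]] | no_small] := pselect (exists u, [/\ G u, u != 0 & `|u| < d]).
  have [j uj] := exists_nz_entry u0.
  apply: (reduce u j Gu uj); apply: (nondense_proj_image sG Gu uj (GS u Gu) Sy _ yd).
  by rewrite -ltr_pdivrMl //; lra.
have Gd g : G g -> g != 0 -> d <= `|g|.
  by move=> Gg g0; rewrite leNgt; apply/negP => gd; apply: no_small; exists g.
have [[g0 Gg0 g00] | G0] := pselect (exists2 g, G g & g != 0); last first.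
  have /card_gt0P [l lS] : (0 < #|S|)%N by rewrite cardS.
  exists (delta_mx l 0); split=> [|g Gg]; first by exists l => //; rewrite mxE !eqxx oner_neq0.
  have [-> | g0] := eqVneq g 0; first by rewrite vdot0r int_num0.
  by case: G0; exists g.
have [s [Gs [u [Gu u0 us]]]] := exists_near_shortest (ex_intro2 _ _ g0 Gg0 g00) d0 Gd.
have [j uj] := exists_nz_entry u0.
have [[l lS] | Sj0] := pselect (exists l, l \in S :\ j).
  apply: (reduce u j Gu uj); apply: (nondense_of_discrete lS _ (discrete_proj_image sG Gu uj Gs)).
  lra.
exists ((u j 0)^-1 *: delta_mx j 0); split.
  by exists j; [exact: supported_nz_entry (GS u Gu) uj | rewrite !mxE !eqxx mulr1 invr_eq0].
move=> g Gg; rewrite vdotZl vdot_delta mulrC; apply: (proj_along_eq0_int sG Gu uj Gs us Gg).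
apply: (supported_empty (S := S :\ j)); last exact: supported_proj_along (GS u Gu) (GS g Gg).
by move=> i; apply/negP => iS; apply: Sj0; exists i.
Qed.

End SubgroupDual.

Section Grid.
Variables (R : realType) (n : nat).

Definition grid_point N (f : {ffun 'I_n -> 'I_N}) : 'cV[R]_n :=
  \col_i ((f i : nat)%:R / N%:R).

Lemma exists_near_grid_point N (y : 'cV[R]_n) : (0 < N)%N ->
  exists (f : {ffun 'I_n -> 'I_N}) (z : 'cV[int]_n),
    `|y - (grid_point f + int_vec z)| <= N%:R^-1.
Proof.
move=> N_gt0; have N0 : (0 : R) < N%:R by rewrite ltr0n.
pose fl : 'cV[int]_n := \col_i Num.floor (y i 0).
pose w i := y i 0 - (Num.floor (y i 0))%:~R.
have w01 i : 0 <= w i < 1.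
  have /andP [h1 h2] := floor_itv (y i 0).
  by move: h1 h2; rewrite /w intrD; set F := _%:~R => h1 h2; apply/andP; split; lra.
pose k i := Num.truncn (w i * N%:R).
have kN i : (k i < N)%N.
  have /andP [w0 w1] := w01 i; rewrite truncn_lt_nat ?mulr_ge0 ?ler0n //.
  by rewrite -[X in _ < X]mul1r ltr_pM2r.
exists [ffun i => Ordinal (kN i)], fl.
apply: mx_norm_le => [|i j]; first by rewrite invr_ge0 ltW.
have -> : (y - (grid_point [ffun i => Ordinal (kN i)] + int_vec fl)) i j =
    w i - (k i)%:R / N%:R by rewrite (ord1 j) !mxE ffunE /w; ring.
have /andP [w0 w1] := w01 i.
have /andP [k1 k2] : (k i)%:R <= w i * N%:R < (k i).+1%:R.
  by apply: truncn_itv; rewrite mulr_ge0 ?ler0n.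
have e1 : (k i)%:R / N%:R <= w i by rewrite ler_pdivrMr.
have e2 : w i < ((k i)%:R + 1) / N%:R by rewrite ltr_pdivlMr // natr1.
by rewrite mulrDl mul1r in e2; rewrite ger0_norm; lra.
Qed.

End Grid.
Arguments grid_point {R n N}.

Section Kronecker.
Variables (R : realType) (n : nat) (v : 'cV[R]_n).
Hypothesis v_indep : ~ rat_dependent v.

Lemma kronecker (y : 'cV[R]_n) (d : R) : 0 < d -> exists t z, `|y - (t *: v + int_vec z)| < d.
Proof.
move=> d0; apply: contrapT => far.
pose G : set 'cV[R]_n := fun x => exists t z, x = t *: v + int_vec z.
have sG : additive_subgroup G.
  split; first by exists 0, 0; rewrite scale0r int_vec0 addr0.
  move=> _ _ [t1 [z1 ->]] [t2 [z2 ->]]; exists (t1 - t2), (z1 - z2).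
  by rewrite int_vecB scalerBl opprD addrACA.
have G_nondense : nondense_in [set: 'I_n] G.
  exists y; first exact: supported_setT.
  exists d => // _ [t [z ->]]; rewrite leNgt; apply/negP => h; by apply: far; exists t, z.
have [a [[l _ al] ha]] := nonzero_dual_of_nondense sG (fun g _ => supported_setT g) G_nondense.
have a_int i : a i 0 \is a Num.int.
  have := ha (delta_mx i 0); rewrite vdotC vdot_delta; apply.
  by exists 0, (delta_mx i 0); rewrite scale0r add0r int_vec_delta.
have av0 : vdot a v = 0.
  apply: contrapT => /eqP av0; apply: (negP (half_not_int R)).
  have := ha ((2 * vdot a v)^-1 *: v); rewrite vdotZr invfM -mulrA mulVf // mulr1; apply.
  by exists (2^-1 / vdot a v), 0; rewrite int_vec0 addr0.
have aE : int_vec (\col_i Num.floor (a i 0)) = a.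
  by apply/matrixP => i j; rewrite (ord1 j) !mxE; apply/eqP; rewrite -intrEfloor.
apply: v_indep; apply/rat_dependentE; exists (\col_i Num.floor (a i 0)); split; last by rewrite aE.
by apply: contraNneq al => q0; rewrite -aE q0 int_vec0 mxE.
Qed.

Lemma kronecker_bounded d : 0 < d -> exists T, 0 <= T /\
  forall y, exists t, `|t| <= T /\ exists z, `|y - (t *: v + int_vec z)| < d.
Proof.
move=> d0; pose N := (Num.truncn (2 / d)).+1.
have Nd : N%:R^-1 < d / 2.
  have N0 : (0 : R) < N%:R by rewrite ltr0n.
  have := truncnS_gt (2 / d); rewrite -/N ltr_pdivrMr // => h.
  by rewrite -[N%:R^-1]mul1r ltr_pdivrMr //; lra.
have near_grid (f : {ffun 'I_n -> 'I_N}) : exists tz : R * 'cV[int]_n,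
    `|grid_point f - (tz.1 *: v + int_vec tz.2)| < d / 2.
  by have [t [z h]] := kronecker (grid_point f) (ltac:(lra) : 0 < d / 2); exists (t, z).
have [tz htz] := choice near_grid.
exists (\sum_f `|(tz f).1|); split=> [|y]; first exact: sumr_ge0.
have [f [z hz]] := @exists_near_grid_point R n N y (ltn0Sn _).
exists (tz f).1; split; first by rewrite (bigD1 f) //= lerDl sumr_ge0.
exists ((tz f).2 + z).
have -> : y - ((tz f).1 *: v + int_vec ((tz f).2 + z)) =
    (y - (grid_point f + int_vec z)) + (grid_point f - ((tz f).1 *: v + int_vec (tz f).2)).
  by rewrite int_vecD; apply/matrixP => i j; rewrite !mxE; ring.
by apply: le_lt_trans (ler_normD _ _) _; have := htz f; lra.
Qed.

End Kronecker.

Section DenseForest.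
Variables (R : realType) (n : nat).
Local Open Scope classical_set_scope.

Lemma lattice_near_direction (A : 'M[R]_n) (g : 'cV[R]_n) (w0 : 'rV[R]_n) eps :
  A \in unitmx -> ~ rat_dependent (invmx A *m w0^T) -> 0 < eps ->
  \forall r \near w0 & T \near +oo, forall c, exists s, `|s| <= T /\
    exists z, `|c + s *: r^T - (A *m int_vec z + g)| < eps.
Proof.
move=> hA hv eps0; pose C := n%:R * `|A| + 1.
have C0 : 0 < C by rewrite ltr_pwDr ?mulr_ge0.
have [T [T0 hT]] : exists T, 0 <= T /\ forall y, exists t, `|t| <= T /\
    exists z, `|y - (t *: (invmx A *m w0^T) + int_vec z)| < eps / (2 * C).
  by apply: kronecker_bounded => //; rewrite divr_gt0 ?mulr_gt0.
exists (ball w0 (eps / (2 * (T + 1))), [set T' | T <= T']).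
  split=> /=; last by apply: nbhs_pinfty_ge; rewrite num_real.
  by apply: nbhsx_ballx; rewrite divr_gt0 ?mulr_gt0 //; lra.
case=> r T' /= [hr TT'] c; rewrite -ball_normE /ball_ /= in hr.
have [t [ht [z hz]]] := hT (invmx A *m (c - g)).
exists (- t); split; first by rewrite normrN (le_trans ht).
exists z; set X := invmx A *m (c - g) - _ in hz.
have -> : c + (- t) *: r^T - (A *m int_vec z + g) = A *m X + t *: (w0 - r)^T.
  rewrite /X [A *m (_ - _)]mulmxBr [A *m (_ + _)]mulmxDr !mulmxA mulmxV // !mul1mx.
  rewrite -scalemxAr mulmxA mulmxV // mul1mx linearB /=.
  by apply/matrixP => a b; rewrite !mxE; ring.
apply: le_lt_trans (ler_normD _ _) _; rewrite normrZ mx_normT.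
have e1 : n%:R * (`|A| * `|X|) < eps / 2.
  apply: (@le_lt_trans _ _ (C * `|X|)); first by rewrite mulrA ler_wpM2r // lerDl.
  have -> : eps / 2 = C * (eps / (2 * C)) by field; rewrite gt_eqF.
  by rewrite ltr_pM2l.
have e2 : `|t| * `|w0 - r| < eps / 2.
  apply: (@le_lt_trans _ _ ((T + 1) * `|w0 - r|)).
    by apply: ler_wpM2r => //; lra.
  have -> : eps / 2 = (T + 1) * (eps / (2 * (T + 1))) by field; lra.
  by rewrite ltr_pM2l //; lra.
by apply: le_lt_trans (lerD (ler_mx_norm_mul _ _) (lexx _)) _; lra.
Qed.

Lemma unit_sphere_compact : compact [set r : 'rV[R]_n | `|r| = 1].
Proof.
apply: bounded_closed_compact.
  exists 1; split; first by rewrite num_real.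
  by move=> M M1 r /= ->; exact: ltW.
have -> : [set r : 'rV[R]_n | `|r| = 1] = (fun r : 'rV[R]_n => `|r|) @^-1` [set 1] by [].
by apply: preimage_closed; [move=> r _; exact: norm_continuous | exact: closed_eq].
Qed.

Lemma dense_forest_of_irrational_preimages k (A : 'I_k -> 'M[R]_n)
    (g : 'I_k -> 'cV[R]_n) : (0 < n)%N -> (forall i, A i \in unitmx) ->
  (forall w : 'cV[R]_n, w != 0 -> exists i, ~ rat_dependent (invmx (A i) *m w)) ->
  dense_forest (fun x => exists i, shifted_lattice (A i) (g i) x).
Proof.
move=> n0 hA hirr eps eps0; have n0R : (0 : R) < n%:R by rewrite ltr0n.
pose P T (r : 'rV[R]_n) := forall c, exists s, `|s| <= T /\
  exists i z, `|c + s *: r^T - (A i *m int_vec z + g i)| < eps / n%:R.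
have /= [M [_ HM]] : \forall T \near +oo, [set r : 'rV[R]_n | `|r| = 1] `<=` P T.
  apply: (iffLR (compact_near_coveringP _) unit_sphere_compact _ (pinfty_nbhs R) P _) => r0 r01.
  have r0T : r0^T != 0 by rewrite -normr_gt0 mx_normT r01.
  have [i hi] := hirr _ r0T.
  apply: filterS (lattice_near_direction (g i) (hA i) hi (divr_gt0 eps0 n0R)).
  by case=> r T /= H c; have [s [hs [z hz]]] := H c; exists s; split=> //; exists i, z.
pose T := `|M| + 1; have MT : M < T by rewrite /T ltr_pwDr ?ler_norm.
have T0 : 0 <= T by rewrite addr_ge0.
exists (2 * n%:R * (T + 1)); split=> [|a b hab]; first by rewrite !mulr_gt0 //; lra.
set d := b - a in hab *; set L := `|d|.
have hL : 2 * (T + 1) <= L.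
  by rewrite -(ler_pM2l n0R) mulrA [n%:R * 2]mulrC -hab norm2_le_mx_norm.
have L0 : 0 < L by lra.
have r1 : `|L^-1 *: d^T| = 1 by rewrite normrZ mx_normT gtr0_norm ?invr_gt0 // mulVf ?gt_eqF.
(* Approximating from the midpoint with |s| <= T <= L / 2 keeps the parameter in [0, 1]. *)
have [s [hs [i [z hz]]]] := HM T MT _ r1 (a + 2^-1 *: d).
exists (2^-1 + s / L); split.
  have : `|s / L| <= 2^-1.
    rewrite normrM [`|L^-1|]gtr0_norm ?invr_gt0 // ler_pdivrMr //; lra.
  by rewrite ler_norml => /andP [h1 h2]; apply/andP; split; lra.
exists (A i *m int_vec z + g i); split; first by exists i, z.
have -> : a + (2^-1 + s / L) *: d - (A i *m int_vec z + g i) =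
    a + 2^-1 *: d + s *: (L^-1 *: d^T)^T - (A i *m int_vec z + g i).
  by rewrite linearZ /= trmxK scalerA scalerDl addrA.
apply: le_lt_trans (norm2_le_mx_norm _) _.
by rewrite mulrC -ltr_pdivlMr.
Qed.

End DenseForest.

Section RationalDependence.
Variables (R : realType) (n : nat).

Lemma rat_dependent_ratr (u : 'cV[R]_n) (p : 'cV[rat]_n) :
  p != 0 -> vdot (map_mx ratr p) u = 0 -> rat_dependent u.
Proof.
move=> p0 hp; pose D := \prod_l denq (p l 0).
pose q := \col_l (numq (p l 0) * \prod_(l' | l' != l) denq (p l' 0)).
have qE : int_vec q = D%:~R *: map_mx ratr p :> 'cV[R]_n.
  apply/matrixP => l j; rewrite (ord1 j) !mxE /D [in RHS](bigD1 l) //= !intrM.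
  rewrite mulrAC; congr (_ * _).
  by rewrite -[LHS](ratr_int R) numqE rmorphM /= ratr_int mulrC.
apply/rat_dependentE; exists q; split; last by rewrite qE vdotZl hp mulr0.
have [l pl] := exists_nz_entry p0; apply: contraNneq pl => q0.
move: (congr1 (fun M : 'cV_n => M l 0) q0); rewrite !mxE => /eqP.
rewrite mulf_eq0 numq_eq0 => /orP [// |].
by rewrite prodf_seq_eq0 => /hasP [l' _ /andP [_]]; rewrite denq_eq0.
Qed.

Lemma rat_dependent_ratmx (u : 'cV[R]_n) (Q : 'M[rat]_n) (c : R) :
  Q \in unitmx -> rat_dependent u -> rat_dependent (c *: (map_mx ratr Q *m u)).
Proof.
move=> hQ /rat_dependentE [q [q0 hq]].
pose qQ : 'cV[rat]_n := map_mx (fun m : int => m%:~R) q.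
have QqQ : Q^T *m ((invmx Q)^T *m qQ) = qQ by rewrite mulmxA -trmx_mul mulVmx // trmx1 mul1mx.
apply: (@rat_dependent_ratr _ ((invmx Q)^T *m qQ)).
  apply: contraNneq q0 => p0; apply/eqP/matrixP => i j; move: QqQ.
  rewrite p0 mulmx0 => /(congr1 (fun N : 'cV[rat]_n => N i j)).
  by rewrite !mxE => /eqP; rewrite eq_sym intr_eq0 => /eqP.
rewrite vdotZr vdot_mulmxr map_trmx -map_mxM QqQ.
have -> : map_mx ratr qQ = int_vec q :> 'cV[R]_n by apply/matrixP => i j; rewrite !mxE ratr_int.
by rewrite hq mulr0.
Qed.

Definition common_dependent_image k (M : 'I_k -> 'M[R]_n) :=
  exists v : 'I_k -> 'cV[R]_n, (forall i, v i != 0) /\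
    (forall i, rat_dependent (v i)) /\ (forall i j, M i *m v i = M j *m v j).

Lemma same_class_refl k (M : 'I_k -> 'M[R]_n) : same_class M M.
Proof.
move=> i; exists 1; split; first exact: oner_neq0.
exists 1%:M; split; first exact: unitmx1.
by rewrite map_mx1 rmorph1 mulmx1 scale1r.
Qed.

Lemma irrational_preimage_of_same_class k (M M' : 'I_k -> 'M[R]_n) :
  (forall i, M' i \in unitmx) -> same_class M M' -> ~ common_dependent_image M ->
  forall w, w != 0 -> exists i, ~ rat_dependent (invmx (M' i) *m w).
Proof.
move=> hM' hclass no_common w w0; apply: contrapT => all_dep.
have dep i : rat_dependent (invmx (M' i) *m w).
  by apply: contrapT => h; apply: all_dep; exists i.
have class_witness i : exists cQ : R * 'M[rat]_n,
    cQ.2 \in unitmx /\ M' i = cQ.1 *: (M i *m map_mx ratr cQ.2).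
  by have [c [_ [Q [hQ e]]]] := hclass i; exists (c, Q).
have [cQ hcQ] := choice class_witness.
pose v i := (cQ i).1 *: (map_mx ratr (cQ i).2 *m (invmx (M' i) *m w)).
have Mv i : M i *m v i = w.
  have [_ e] := hcQ i.
  by rewrite /v -scalemxAr [M i *m _]mulmxA scalemxAl -e mulmxA mulmxV // mul1mx.
apply: no_common; exists v; split; [|split].
- by move=> i; apply: contraNneq w0 => v0; rewrite -(Mv i) v0 mulmx0.
- by move=> i; have [hQ _] := hcQ i; exact: rat_dependent_ratmx.
- by move=> i j; rewrite !Mv.
Qed.

End RationalDependence.

Section Obstruction.
Variables (R : realType) (n : nat).

Lemma half_le_dist_shifted_lattice (A : 'M[R]_n) (q z : 'cV[int]_n) (u x : 'cV[R]_n) :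
  A \in unitmx -> vdot (int_vec q) (invmx A *m x) = 0 -> vdot (int_vec q) u = 2^-1 ->
  2^-1 <= n%:R * `|int_vec q : 'cV[R]_n| * (n%:R * `|invmx A|) *
            norm2 (x - (A *m int_vec z + - (A *m u))).
Proof.
move=> hA qx qu; set y := x - _.
have Ay : invmx A *m y = invmx A *m x - int_vec z + u.
  by rewrite mulmxBr mulmxDr mulmxN !mulmxA mulVmx // !mul1mx opprD opprK addrA.
have half : 2^-1 <= `|vdot (int_vec q) (invmx A *m y)|.
  rewrite Ay vdotDr vdotBr qx sub0r qu addrC.
  exact/ler_half_dist_int/vdot_int_vec.
apply: le_trans half _; apply: le_trans (ler_vdot _ _) _.
rewrite -!mulrA ler_wpM2l // ler_wpM2l // mulrA; apply: le_trans (ler_mx_norm_mul _ _) _.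
by rewrite mulrA ler_wpM2l ?mulr_ge0 // norm2_ge_mx_norm.
Qed.

Lemma not_dense_forest_of_common_image k (M : 'I_k -> 'M[R]_n) :
  (0 < k)%N -> (forall i, M i \in unitmx) -> common_dependent_image M ->
  exists g, ~ dense_forest (fun x => exists i, shifted_lattice (M i) (g i) x).
Proof.
move=> k0 hM [v [v0 [vdep vM]]].
pose w := M (Ordinal k0) *m v (Ordinal k0).
have vE i : invmx (M i) *m w = v i by rewrite /w -(vM i (Ordinal k0)) mulmxA mulVmx // mul1mx.
have w0 : w != 0 by apply: contraNneq (v0 (Ordinal k0)) => w0; rewrite -vE w0 mulmx0.
have [q hq] := choice (fun i => (rat_dependentE (v i)).1 (vdep i)).
have [l hl] := choice (fun i => exists_nz_entry (hq i).1).
pose u i : 'cV[R]_n := (2 * (q i (l i) 0)%:~R)^-1 *: delta_mx (l i) 0.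
have qu i : vdot (int_vec (q i)) (u i) = 2^-1.
  rewrite vdotZr vdotC vdot_delta mxE invfM -mulrA mulVf ?mulr1 //.
  by rewrite intr_eq0.
exists (fun i => - (M i *m u i)) => dense.
pose Ci i := n%:R * `|int_vec (q i) : 'cV[R]_n| * (n%:R * `|invmx (M i)|).
have Ci0 i : 0 <= Ci i by rewrite !mulr_ge0.
pose C := \sum_i Ci i.
have [|V [V0 HV]] := dense (2 * (C + 1))^-1.
  by rewrite invr_gt0 mulr_gt0 // ltr_pwDr ?sumr_ge0.
have w_pos : 0 < norm2 w by apply: lt_le_trans (norm2_ge_mx_norm w); rewrite normr_gt0.
have hb : norm2 ((V / norm2 w) *: w - 0) = V.
  by rewrite subr0 norm2Z ger0_norm ?divr_ge0 ?ltW // divfK ?gt_eqF.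
have [t [_ [_ [[i [z ->]] close]]]] := HV _ _ hb.
have on_line : vdot (int_vec (q i)) (invmx (M i) *m (0 + t *: ((V / norm2 w) *: w - 0))) = 0.
  by rewrite add0r subr0 scalerA -scalemxAr vE vdotZr (hq i).2 mulr0.
have half : 2^-1 <= Ci i * norm2 _ := half_le_dist_shifted_lattice z (hM i) on_line (qu i).
set D := norm2 _ in close half.
have CD : Ci i * D <= C * (2 * (C + 1))^-1.
  apply: ler_pM; [exact: Ci0 | exact: sqrtr_ge0 | | exact: ltW].
  by rewrite /C (bigD1 i) //= lerDl sumr_ge0.
have C0 : 0 <= C by rewrite sumr_ge0.
have E : C * (2 * (C + 1))^-1 = 2^-1 - (2 * (C + 1))^-1 by field; lra.
rewrite E in CD.
have : 0 < (2 * (C + 1))^-1 by rewrite invr_gt0; lra.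
lra.
Qed.

End Obstruction.

Theorem theorem1p1 (R : realType) (n k : nat) (hn : (2 <= n)%N) (hk : (2 <= k)%N)
  (M : 'I_k -> 'M[R]_n) (hM : forall i, M i \in unitmx) :
  (~ exists v : 'I_k -> 'cV[R]_n,
       (forall i, v i != 0) /\ (forall i, rat_dependent (v i)) /\
       (forall i j, M i *m v i = M j *m v j))
  <->
  (forall (g : 'I_k -> 'cV[R]_n) (M' : 'I_k -> 'M[R]_n),
     (forall i, M' i \in unitmx) -> same_class M M' ->
     dense_forest (fun x => exists i : 'I_k, shifted_lattice (M' i) (g i) x)).
Proof.
split=> [no_common g M' hM' hclass | dense common].
  have hirr := irrational_preimage_of_same_class hM' hclass no_common.
  exact: dense_forest_of_irrational_preimages (ltnW hn) hM' hirr.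
have [g not_dense] := not_dense_forest_of_common_image (ltnW hk) hM common.
exact/not_dense/dense/same_class_refl.
Qed.
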